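(* Suppose $G_1=G_2=\dots=G_n$. Let $\bar k=\min\{k\in\{1,\dots,n\}: k>\frac{U_1^-}{U_1^++U_1^-}\,n\}$. Then the qualified majority rule $f^{(\bar k)}$ solves program (OPT), i.e., it maximizes $W(f)$ over all SCFs $f$ that are anonymous and BIC. In particular, the maximal expected welfare in (OPT) is attained by an ordinal SCF.
   Context: There are $n\ge 2$ agents $N=\{1,\dots,n\}$ choosing between a Reform $R$ and the Status quo $S$. Agent $i$ gets utility $0$ if $S$ is chosen and utility $v_i\in\mathbb{R}$ if $R$ is chosen. Values are independent random variables $\tilde v_1,\dots,\tilde v_n$, $\tilde v_i\sim G_i$ (Borel probability distributions on $\mathbb{R}$, $G_i(0)=\Pr(\tilde v_i\le 0)$). Standing assumptions: all $\tilde v_i$ have the same support $V$ with $0\notin V$; $\mathbb{E}|\tilde v_i|<\infty$; $p_i:=1-G_i(0)\in(0,1)$. Let $U_i^+=\mathbb{E}(\tilde v_i\mid \tilde v_i>0)$ and $U_i^-=\mathbb{E}(|\tilde v_i|\mid\tilde v_i<0)$ (both positive and finite). An SCF is a Borel measurable $f:V^n\to[0,1]$ (probability of choosing $R$). $f$ is anonymous if $f(v)=f(\pi v)$ for every $v\in V^n$ and every permutation $\pi$ of $N$, where $\pi v=(v_{\pi(1)},\dots,v_{\pi(n)})$. $f$ is BIC if for every $i$ and all $v_i,v_i'\in V$: $v_i\,\mathbb{E}(f(v_i,\tilde v_{-i}))\ge v_i\,\mathbb{E}(f(v_i',\tilde v_{-i}))$ (expectation over $\tilde v_{-i}=(\tilde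 v_j)_{j\neq i}$). Expected welfare is $W(f)=\mathbb{E}\big(f(\tilde v)\sum_{i=1}^n\tilde v_i\big)$. Program (OPT): maximize $W(f)$ subject to $f$ being anonymous and BIC. For $v\in V^n$ let $\chi(v)=\{i\in N: v_i>0\}$. $f$ is ordinal if $f(v)=f(v')$ whenever $\chi(v)=\chi(v')$. For $k\in\{1,\dots,n\}$, the qualified majority rule $f^{(k)}$ is $f^{(k)}(v)=1$ if $|\chi(v)|\ge k$ and $f^{(k)}(v)=0$ otherwise. *)

From HB Require Import structures.
From mathcomp Require Import all_boot all_order all_algebra all_fingroup.
From mathcomp Require Import all_classical all_reals all_analysis.
Set Implicit Arguments. Unset Strict Implicit. Unset Printing Implicit Defensive.
Import Order.TTheory GRing.Theory Num.Theory.
Local Open Scope classical_set_scope.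
Local Open Scope ring_scope.

Section Defs.
Context {R : realType}.

Definition law_support (mu : probability R R) : set R :=
  [set x | forall e : R, 0 < e ->
    (0 < mu [set y : R | (x - e < y < x + e)%R])%E].

Definition Uplus (mu : probability R R) : R :=
  fine (\int[mu]_(x in [set x : R | 0 < x]) x%:E) / fine (mu [set x : R | 0 < x]).
Definition Uminus (mu : probability R R) : R :=
  fine (\int[mu]_(x in [set x : R | x < 0]) (- x)%:E) / fine (mu [set x : R | x < 0]).

Definition is_kbar (mu : probability R R) (n k : nat) : Prop :=
  [/\ (1 <= k <= n)%N,
      Uminus mu / (Uplus mu + Uminus mu) * n%:R < k%:R
    & forall k' : nat, (1 <= k' <= n)%N ->
        Uminus mu / (Uplus mu + Uminus mu) * n%:R < k'%:R -> (k <= k')%N].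

Definition in_supp_n (mu : probability R R) (n : nat) (v : n.-tuple R) : Prop :=
  forall i : 'I_n, law_support mu (tnth v i).

(* A social choice function: Borel measurable, valued in [0,1]
   (an SCF on V^n, extended to R^n). *)
Definition SCF (n : nat) (f : n.-tuple R -> R) : Prop :=
  measurable_fun setT f /\ forall v, 0 <= f v <= 1.

Definition anonymous (mu : probability R R) (n : nat) (f : n.-tuple R -> R) : Prop :=
  forall (v : n.-tuple R) (pi : 'S_n), in_supp_n mu v ->
    f v = f [tuple tnth v (pi i) | i < n].

Definition ordinal_scf (mu : probability R R) (n : nat) (f : n.-tuple R -> R) : Prop :=
  forall v v' : n.-tuple R, in_supp_n mu v -> in_supp_n mu v' ->
    (forall i, (0 < tnth v i) = (0 < tnth v' i)) -> f v = f v'.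

Definition qmr (n k : nat) (v : n.-tuple R) : R :=
  if (k <= count (fun i : 'I_n => (0 < tnth v i)%R) (enum 'I_n))%N then 1 else 0.

Section Prob.
Context {d : measure_display} {Omega : measurableType d}.
Variable P : probability Omega R.

Definition profile (n : nat) (X : 'I_n -> Omega -> R) (w : Omega) : n.-tuple R :=
  [tuple X i w | i < n].

Definition profile_repl (n : nat) (X : 'I_n -> Omega -> R) (i : 'I_n) (x : R)
    (w : Omega) : n.-tuple R :=
  [tuple if j == i then x else X j w | j < n].

Definition iid (mu : probability R R) (n : nat) (X : 'I_n -> Omega -> R) : Prop :=
  [/\ forall i, measurable_fun setT (X i),
      forall i (B : set R), measurable B -> P (X i @^-1` B) = mu B
    & forall B : 'I_n -> set R, (forall i, measurable (B i)) ->
        P [set w | forall i, B i (X i w)] = (\prod_(i < n) P (X i @^-1` B i))%E].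

Definition interim (n : nat) (X : 'I_n -> Omega -> R) (f : n.-tuple R -> R)
    (i : 'I_n) (x : R) : R :=
  fine (\int[P]_w (f (profile_repl X i x w))%:E).

Definition BIC (mu : probability R R) (n : nat) (X : 'I_n -> Omega -> R)
    (f : n.-tuple R -> R) : Prop :=
  forall (i : 'I_n) (x x' : R), law_support mu x -> law_support mu x' ->
    x * interim X f i x' <= x * interim X f i x.

Definition welfare (n : nat) (X : 'I_n -> Omega -> R) (f : n.-tuple R -> R) : \bar R :=
  \int[P]_w (f (profile X w) * \sum_(i < n) X i w)%:E.

End Prob.
End Defs.

From HB Require Import structures.
From mathcomp Require Import all_boot all_order all_algebra all_fingroup.
From mathcomp Require Import all_classical all_reals all_analysis.
From mathcomp Require Import measurable_realfun lra.
Import Order.TTheory GRing.Theory Num.Theory.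
Set Implicit Arguments. Unset Strict Implicit. Unset Printing Implicit Defensive.
Local Open Scope classical_set_scope.
Local Open Scope ring_scope.

Local Notation Rpos := [set x | (0 < x)%R].

(* Under BIC, an agent's interim probability of the reform is the same for all
   positive values in the support and the same for all negative ones (0 is not
   in the support).  Integrating out the other agents, which independence allows,
   E[v_i f(v)] therefore equals E[(U^+ 1{v_i > 0} - U^- 1{v_i < 0}) f(v)], so the
   welfare of every BIC rule is E[f(v) s(v)] with
   s(v) = (U^+ + U^-) |chi(v)| - U^- n.  By the choice of kbar, s(v) >= 0 exactly
   when |chi(v)| >= kbar, so f^(kbar) maximises f(v) s(v) pointwise, and it is
   itself BIC because the interim probability is monotone in the own value. *)

Section Cylinders.
Context {R : realType} (n : nat).

Definition cylinder (B : 'I_n -> set R) : set (n.-tuple R) :=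
  [set v | forall j, B j (tnth v j)].

Definition cylinders : set (set (n.-tuple R)) :=
  [set cylinder B | B in [set B | forall j, measurable (B j)]].

Lemma measurable_cylinder B : (forall j, measurable (B j)) -> measurable (cylinder B).
Proof.
move=> mB.
have -> : cylinder B = \big[setI/setT]_(j < n) ((fun v => tnth v j) @^-1` B j).
  apply/seteqP; split=> v; rewrite -bigcap_seq => Bv j; first by move=> _; exact: Bv.
  by apply: Bv; exact: mem_index_enum.
apply: bigsetI_measurable => j _.
by rewrite -[_ @^-1` _]setTI; apply: measurable_tnth.
Qed.

Lemma measurable_tupleE : @measurable _ (n.-tuple R) = <<s cylinders >>.
Proof.
apply/seteqP; split; last first.
  apply: smallest_sub; first exact: sigma_algebra_measurable.
  by move=> _ [B mB <-]; exact: measurable_cylinder.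
rewrite /measurable /= /g_sigma_preimage.
apply: smallest_sub; first exact: smallest_sigma_algebra.
move=> A; rewrite -bigcup_seq => -[i _ [B mB <-]].
apply: sub_sigma_algebra; exists (fun j => if j == i then B else setT).
  by move=> j; case: ifP.
apply/seteqP; split=> v /=; first by move=> /(_ i); rewrite eqxx.
by move=> [_ Bv] j; case: ifP => // /eqP ->.
Qed.

Lemma setI_closed_cylinders : setI_closed cylinders.
Proof.
move=> _ _ [B mB <-] [C mC <-]; exists (fun j => B j `&` C j).
  by move=> j; apply: measurableI.
by apply/seteqP; split=> v /=; [move=> BCv; split=> j; case: (BCv j)|move=> [] Bv Cv j].
Qed.

Lemma cylinders_setT : cylinders setT.
Proof. by exists (fun _ => setT) => //; apply/seteqP. Qed.

End Cylinders.

Section Resampling.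
Context {R : realType} {d : measure_display} {Omega : measurableType d}.
Variables (P : probability Omega R) (n : nat) (X : 'I_n -> Omega -> R).
Hypothesis mX : forall i, measurable_fun setT (X i).
Hypothesis indepX : forall B : 'I_n -> set R, (forall i, measurable (B i)) ->
  P [set w | forall i, B i (X i w)] = (\prod_(i < n) P (X i @^-1` B i))%E.

Lemma measurable_profile : measurable_fun setT (profile X).
Proof.
apply/measurable_fun_tnthP => j.
by rewrite (_ : _ \o _ = X j) //; apply/funext => w /=; rewrite tnth_mktuple.
Qed.

Lemma measurable_profile_repl i x : measurable_fun setT (profile_repl X i x).
Proof.
apply/measurable_fun_tnthP => j.
have [->|ji] := eqVneq j i.
  rewrite (_ : _ \o _ = cst x); first exact: measurable_cst.
  by apply/funext => w /=; rewrite tnth_mktuple eqxx.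
rewrite (_ : _ \o _ = X j) //.
by apply/funext => w /=; rewrite tnth_mktuple (negbTE ji).
Qed.

(* Under [P \x P], coordinate [i] is read from an independent copy of the sample. *)
Definition resample (i : 'I_n) (z : Omega * Omega) : n.-tuple R :=
  profile_repl X i (X i z.1) z.2.

Lemma measurable_resample i : measurable_fun setT (resample i).
Proof.
apply/measurable_fun_tnthP => j.
have [->|ji] := eqVneq j i.
  rewrite (_ : _ \o _ = X i \o fst); first exact: measurableT_comp.
  by apply/funext => z /=; rewrite tnth_mktuple eqxx.
rewrite (_ : _ \o _ = X j \o snd); first exact: measurableT_comp.
by apply/funext => z /=; rewrite tnth_mktuple (negbTE ji).
Qed.

Local Open Scope ereal_scope.

Lemma profile_preimage_cylinder B :
  profile X @^-1` cylinder B = [set w | forall j, B j (X j w)].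
Proof. by apply/seteqP; split=> w /= Bw j; move: (Bw j); rewrite tnth_mktuple. Qed.

Lemma measurable_profile_preimage A : measurable A -> measurable (profile X @^-1` A).
Proof. by move=> mA; rewrite -[_ @^-1` _]setTI; apply: measurable_profile. Qed.

Lemma resample_cylinder i B : (forall j, measurable (B j)) ->
  (P \x P) (resample i @^-1` cylinder B) = P (profile X @^-1` cylinder B).
Proof.
move=> mB.
pose B' j := if j == i then setT else B j.
have mB' j : measurable (B' j) by rewrite /B'; case: ifP.
have -> : resample i @^-1` cylinder B = X i @^-1` B i `*` profile X @^-1` cylinder B'.
  apply/seteqP; split=> -[w1 w2] /=.
    move=> Bw; split; first by move: (Bw i); rewrite tnth_mktuple eqxx.
    move=> j; rewrite tnth_mktuple /B'; case: ifP => // /negbT ji.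
    by move: (Bw j); rewrite tnth_mktuple (negbTE ji).
  move=> [Bw1 Bw2] j; rewrite tnth_mktuple; case: ifP => [/eqP ->//|ji].
  by move: (Bw2 j); rewrite tnth_mktuple /B' ji.
rewrite product_measure1E; last 2 first.
- by rewrite -[_ @^-1` _]setTI; apply: mX.
- exact: measurable_profile_preimage (measurable_cylinder mB').
rewrite !profile_preimage_cylinder (indepX mB).
rewrite [X in _ * X](_ : _ = \prod_(j < n) P (X j @^-1` B' j)); last exact: indepX mB'.
rewrite [RHS](bigD1 i) //= [X in _ * X](bigD1 i) //= {1}/B' eqxx preimage_setT.
rewrite probability_setT mul1e; congr (_ * _).
by apply: eq_bigr => j /negbTE ji; rewrite /B' ji.
Qed.

(* Both laws agree on cylinders, a pi-system generating the sigma-algebra. *)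
Lemma resample_preimage i A : measurable A ->
  (P \x P) (resample i @^-1` A) = P (profile X @^-1` A).
Proof.
move=> mA.
pose f1 : {mfun _ >-> n.-tuple R} :=
  HB.pack (resample i) (isMeasurableFun.Build _ _ _ _ _ (measurable_resample i)).
pose f2 : {mfun _ >-> n.-tuple R} :=
  HB.pack (profile X) (isMeasurableFun.Build _ _ _ _ _ measurable_profile).
apply: (measure_unique (@cylinders R n) (fun _ => setT) (@measurable_tupleE R n)
  (@setI_closed_cylinders R n) (fun _ => @cylinders_setT R n) _
  (distribution (P \x P) f1) (distribution P f2)) => //.
- by apply/seteqP; split=> // x _; exists 0%N.
- by move=> _ [B mB <-]; exact: resample_cylinder.
- by move=> _; rewrite /distribution /pushforward /= probability_setT ltry.
Qed.

Lemma integral_profile_resample (i : 'I_n) (H : n.-tuple R -> \bar R) :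
  measurable_fun [set: n.-tuple R] H -> (forall v, 0 <= H v) ->
  \int[P]_w H (profile X w) = \int[P]_w1 \int[P]_w2 H (profile_repl X i (X i w1) w2).
Proof.
move=> mH H0.
pose f1 : {mfun _ >-> n.-tuple R} :=
  HB.pack (resample i) (isMeasurableFun.Build _ _ _ _ _ (measurable_resample i)).
pose f2 : {mfun _ >-> n.-tuple R} :=
  HB.pack (profile X) (isMeasurableFun.Build _ _ _ _ _ measurable_profile).
transitivity (\int[distribution P f2]_y H y); first by rewrite ge0_integral_distribution.
transitivity (\int[distribution (P \x P) f1]_y H y).
  by apply: eq_measure_integral => A mA _; exact/esym/resample_preimage.
rewrite ge0_integral_distribution // (@fubini_tonelli1 _ _ _ _ _ P P (H \o f1)) //.
- exact: measurableT_comp (measurable_resample i).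
- by move=> z; exact: H0.
Qed.

End Resampling.

Lemma measurable_set_itvoo {R : realType} (a b : R) : measurable [set y | a < y < b].
Proof.
rewrite (_ : [set y | _] = `]a, b[%classic); first exact: measurable_itv.
by apply/seteqP; split=> y; rewrite /= in_itv.
Qed.

Section Support.
Context {R : realType} (mu : probability R R).
Local Open Scope ereal_scope.

Definition null_rat_interval (k : nat) : set R :=
  if unpickle k is Some (q1, q2) then
    if mu `]ratr q1, ratr q2[%classic == 0 then `]ratr q1, ratr q2[%classic else set0
  else set0.

Lemma negligible_null_rat_interval k : mu.-negligible (null_rat_interval k).
Proof.
rewrite /null_rat_interval; case: (unpickle k) => [[q1 q2]|]; last exact: negligible_set0.
case: ifPn => [/eqP null_q|_]; last exact: negligible_set0.
by exists `]ratr q1, ratr q2[%classic; split => //; exact: measurable_itv.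
Qed.

(* A point outside the support lies in a null interval with rational endpoints,
   and there are countably many of those. *)
Lemma negligible_not_support : mu.-negligible (~` law_support mu).
Proof.
apply: (negligibleS _ (negligible_bigcup negligible_null_rat_interval)).
move=> x /= /existsNP [e /not_implyP [e0 /negP]]; rewrite -leNgt => null_e.
have /rat_in_itvoo [q1] : (x - e < x)%R by rewrite ltrBlDr ltrDl.
rewrite in_itv /= => /andP [q1e xq1].
have /rat_in_itvoo [q2] : (x < x + e)%R by rewrite ltrDl.
rewrite in_itv /= => /andP [xq2 q2e].
exists (pickle (q1, q2)); first exact: I.
rewrite /null_rat_interval pickleK.
have -> : mu `]ratr q1, ratr q2[%classic == 0.
  rewrite eq_le measure_ge0 andbT (le_trans _ null_e) //.
  apply: le_measure; rewrite ?inE; [exact: measurable_itv|exact: measurable_set_itvoo|].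
  move=> y /=; rewrite in_itv /= => /andP [q1y yq2].
  by rewrite (lt_trans q1e q1y) (lt_trans yq2 q2e).
by rewrite /= in_itv /= xq1 xq2.
Qed.

End Support.

Section PositiveNegativeParts.
Context {R : realType} (mu : probability R R).
Hypothesis mu_int : mu.-integrable setT (fun x => x%:E).
Local Open Scope ereal_scope.

Lemma measurable_Rpos : measurable (Rpos : set R).
Proof.
rewrite (_ : Rpos = `]0%R, +oo[%classic); first exact: measurable_itv.
by apply/seteqP; split=> y; rewrite /= in_itv /= andbT.
Qed.

Lemma measurable_Rneg : measurable [set x : R | x < 0]%R.
Proof.
rewrite (_ : [set x | _] = `]-oo, 0%R[%classic); first exact: measurable_itv.
by apply/seteqP; split=> y; rewrite /= in_itv.
Qed.

Lemma Uplus_ge0 : (0 <= Uplus mu)%R.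
Proof.
apply: divr_ge0; apply: fine_ge0; last exact: measure_ge0.
by apply: integral_ge0 => x /= x0; rewrite lee_fin ltW.
Qed.

Lemma Uminus_ge0 : (0 <= Uminus mu)%R.
Proof.
apply: divr_ge0; apply: fine_ge0; last exact: measure_ge0.
by apply: integral_ge0 => x /= x0; rewrite lee_fin oppr_ge0 ltW.
Qed.

Lemma measure_not_Rpos : ~ law_support mu 0%R -> mu (~` Rpos) = mu [set x | x < 0]%R.
Proof.
move=> /existsNP [e /not_implyP [e0 /negP]]; rewrite -leNgt => null_e.
have mneg := measurable_Rneg.
apply/eqP; rewrite eq_le; apply/andP; split; last first.
  apply: le_measure; rewrite ?inE; [exact: mneg|exact: measurableC measurable_Rpos|].
  by move=> x /= x0; apply/negP; rewrite -leNgt ltW.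
apply: (le_trans (y := mu ([set x | x < 0]%R `|` [set y | 0 - e < y < 0 + e]%R))).
  apply: le_measure; rewrite ?inE.
  - exact: measurableC measurable_Rpos.
  - exact: measurableU mneg (measurable_set_itvoo _ _).
  move=> x /= /negP; rewrite -leNgt le_eqVlt => /orP [/eqP ->|x0]; last by left.
  by right; rewrite sub0r add0r oppr_lt0 e0.
apply: (le_trans (measureU2 _ mneg (measurable_set_itvoo _ _))).
by rewrite -[leRHS]adde0 leeD2l.
Qed.

Lemma integral_pos_part : 0 < mu Rpos ->
  \int[mu]_x (((@idfun R)^\+ x)%:E) = \int[mu]_x (Uplus mu * \1_Rpos x)%:E.
Proof.
move=> mu_pos.
rewrite [RHS](eq_integral (fun x : R => (Uplus mu)%:E * (\1_Rpos x)%:E)); last first.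
  by move=> x _; rewrite EFinM.
rewrite ge0_integralZl_EFin ?Uplus_ge0 //; last first.
  by apply/measurable_EFinP; exact: measurable_indic measurable_Rpos.
have Rpos_fin : mu Rpos \is a fin_num by rewrite fin_num_measure //; exact: measurable_Rpos.
have int_fin : \int[mu]_(x in Rpos) x%:E \is a fin_num.
  apply: integrable_fin_num; first exact: measurable_Rpos.
  exact: (integrableS measurableT measurable_Rpos) mu_int.
rewrite integral_indic ?setIT //; last exact: measurable_Rpos.
transitivity ((Uplus mu * fine (mu Rpos))%:E); last by rewrite EFinM fineK.
rewrite /Uplus divfK; last by rewrite gt_eqF // -lte_fin fineK.
rewrite fineK // [RHS]integral_mkcond; apply: eq_integral => x _.
rewrite patchE /funrpos /=; case: ifPn => [/set_mem /= x0|/negP xpos].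
  by rewrite max_l // ltW.
by rewrite max_r // leNgt; apply/negP => x0; apply: xpos; exact: mem_set.
Qed.

Lemma integral_neg_part : ~ law_support mu 0%R -> mu Rpos < 1 ->
  \int[mu]_x (((@idfun R)^\- x)%:E) = \int[mu]_x (Uminus mu * \1_(~` Rpos) x)%:E.
Proof.
move=> not0 mu_lt1.
have mnpos := measurableC measurable_Rpos.
rewrite [RHS](eq_integral (fun x : R => (Uminus mu)%:E * (\1_(~` Rpos) x)%:E)); last first.
  by move=> x _; rewrite EFinM.
rewrite ge0_integralZl_EFin ?Uminus_ge0 //; last exact/measurable_EFinP/measurable_indic.
have neg_gt0 : 0 < mu [set x | x < 0]%R.
  rewrite -measure_not_Rpos // probability_setC; last exact: measurable_Rpos.
  by rewrite sube_gt0.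
have neg_fin : mu [set x | x < 0]%R \is a fin_num.
  by rewrite fin_num_measure //; exact: measurable_Rneg.
have int_fin : \int[mu]_(x in [set x | x < 0]%R) (- x)%:E \is a fin_num.
  apply: integrable_fin_num; first exact: measurable_Rneg.
  apply: (integrableS measurableT measurable_Rneg) => //.
  apply: (eq_integrable measurableT _ _ _ (integrableN mu_int)) => x _.
  by rewrite /= EFinN.
rewrite integral_indic ?setIT //.
transitivity ((Uminus mu * fine (mu [set x | x < 0]%R))%:E).
  rewrite /Uminus divfK; last by rewrite gt_eqF // -lte_fin fineK.
  rewrite fineK // [RHS]integral_mkcond; apply: eq_integral => x _.
  rewrite patchE /funrneg /=; case: ifPn => [/set_mem /= x0|/negP xneg].
    by rewrite max_l // oppr_ge0 ltW.
  by rewrite max_r // oppr_le0 leNgt; apply/negP => x0; apply: xneg; exact: mem_set.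
rewrite EFinM fineK //; congr (_ * _); symmetry; exact: measure_not_Rpos.
Qed.

End PositiveNegativeParts.

Section Interim.
Context {R : realType} {d : measure_display} {Omega : measurableType d}.
Variables (P : probability Omega R) (mu : probability R R) (n : nat).
Variables (X : 'I_n -> Omega -> R) (F : n.-tuple R -> R).
Hypotheses (iidX : iid P mu X) (scfF : SCF F).
Local Open Scope ereal_scope.

Let mX i : measurable_fun setT (X i). Proof. by case: iidX. Qed.

Let F01 v : (0 <= F v <= 1)%R. Proof. exact: scfF.2. Qed.

Lemma measurable_scf_profile_repl i x :
  measurable_fun setT (fun w => (F (profile_repl X i x w))%:E).
Proof. exact/measurable_EFinP/(measurableT_comp scfF.1 (measurable_profile_repl mX i x)). Qed.

Lemma interimE i x : \int[P]_w (F (profile_repl X i x w))%:E = (interim P X F i x)%:E.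
Proof.
have int_ge0 : 0 <= \int[P]_w (F (profile_repl X i x w))%:E.
  by apply: integral_ge0 => w _; rewrite lee_fin; case/andP: (F01 (profile_repl X i x w)).
rewrite fineK // ge0_fin_numE // (@le_lt_trans _ _ (\int[P]_w (cst 1 w))) ?ltry //.
  apply: ge0_le_integral => //.
  - by move=> w _; rewrite lee_fin; case/andP: (F01 (profile_repl X i x w)).
  - exact: measurable_scf_profile_repl.
  - by move=> w _; rewrite lee_fin; case/andP: (F01 (profile_repl X i x w)).
by rewrite integral_cst //= probability_setT mul1e ltry.
Qed.

Lemma interim_ge0 i x : (0 <= interim P X F i x)%R.
Proof.
apply: fine_ge0; apply: integral_ge0 => w _.
by rewrite lee_fin; case/andP: (F01 (profile_repl X i x w)).
Qed.

Lemma measurable_interim_comp i :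
  measurable_fun setT (fun w => (interim P X F i (X i w))%:E).
Proof.
have mF : measurable_fun setT (fun z => (F (resample X i z))%:E).
  apply/measurable_EFinP; exact: measurableT_comp scfF.1 (measurable_resample mX i).
have F0 z : 0 <= (F (resample X i z))%:E by rewrite lee_fin; case/andP: (F01 (resample X i z)).
apply: (eq_measurable_fun (fun w => \int[P]_w2 (F (resample X i (w, w2)))%:E)).
  by move=> w _; exact: (interimE i (X i w)).
exact: (@measurable_fun_fubini_tonelli_F _ _ _ _ _ P _ mF F0).
Qed.

Lemma integral_comp_law i (g : R -> R) : measurable_fun setT g -> (forall x, 0 <= g x)%R ->
  \int[P]_w (g (X i w))%:E = \int[mu]_x (g x)%:E.
Proof.
move=> mg g0.
pose Xi : {mfun Omega >-> R} := HB.pack (X i) (isMeasurableFun.Build _ _ _ _ _ (mX i)).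
transitivity (\int[distribution P Xi]_x (g x)%:E).
  by rewrite ge0_integral_distribution //; exact/measurable_EFinP.
by apply: eq_measure_integral => A mA _; case: iidX => _ lawX _; exact: lawX.
Qed.

Lemma integral_mul_interim i (g : R -> R) : measurable_fun setT g -> (forall x, 0 <= g x)%R ->
  \int[P]_w (g (X i w) * F (profile X w))%:E =
  \int[P]_w ((g (X i w))%:E * (interim P X F i (X i w))%:E).
Proof.
move=> mg g0; case: iidX => _ _ indepX.
pose H v := (g (tnth v i) * F v)%:E.
transitivity (\int[P]_w H (profile X w)).
  by apply: eq_integral => w _; rewrite /H tnth_mktuple.
rewrite (integral_profile_resample mX indepX i (H := H)).
- apply: eq_integral => w _; rewrite -interimE -ge0_integralZl_EFin //.
  + by apply: eq_integral => w2 _; rewrite /H tnth_mktuple eqxx EFinM.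
  + by move=> w2 _; rewrite lee_fin; case/andP: (F01 (profile_repl X i (X i w) w2)).
  + exact: measurable_scf_profile_repl.
- apply/measurable_EFinP/measurable_funM; last exact: scfF.1.
  exact: measurableT_comp mg (measurable_tnth i).
- by move=> v; rewrite /H lee_fin mulr_ge0 //; case/andP: (F01 v).
Qed.

Lemma negligible_comp_not_support i : P.-negligible (X i @^-1` ~` law_support mu).
Proof.
have [N [mN N0 notsN]] := negligible_not_support mu.
exists (X i @^-1` N); split => [||w /notsN //].
  by rewrite -[_ @^-1` _]setTI; exact: mX.
by case: iidX => _ lawX _; rewrite lawX.
Qed.

Lemma integral_mul_interim_const i (Q : set R) (g : R -> R) (c : R) :
  measurable_fun setT g -> (forall x, 0 <= g x)%R -> {in ~` Q, g =1 cst 0%R} ->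
  (0 <= c)%R -> (forall x, law_support mu x -> Q x -> interim P X F i x = c) ->
  \int[P]_w (g (X i w) * F (profile X w))%:E = c%:E * \int[mu]_x (g x)%:E.
Proof.
move=> mg g0 gQ c0 Qc.
have mgX : measurable_fun setT (fun w => (g (X i w))%:E).
  exact/measurable_EFinP/(measurableT_comp mg (mX i)).
rewrite integral_mul_interim // -(integral_comp_law i) // -ge0_integralZl_EFin //; last first.
  by move=> w _; rewrite lee_fin.
apply: ge0_ae_eq_integral => //.
- exact: emeasurable_funM mgX (measurable_interim_comp i).
- exact: measurable_funeM.
- by move=> w _; rewrite mule_ge0 // lee_fin // interim_ge0.
- by move=> w _; rewrite mule_ge0 // lee_fin.
(* The integrands agree wherever [X i] lies in the support, i.e. almost surely. *)
apply: (negligibleS _ (negligible_comp_not_support i)) => w /= neq sX; apply: neq => _.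
have [QX|nQX] := pselect (Q (X i w)); first by rewrite Qc // muleC.
by rewrite gQ ?inE //= mul0e mule0.
Qed.

(* Both sides equal [c * E g = c * E h], where [c] is the common interim value on [Q]. *)
Lemma integral_mul_interim_eq i (Q : set R) (g h : R -> R) :
  (forall x y, law_support mu x -> law_support mu y -> Q x -> Q y ->
     interim P X F i x = interim P X F i y) ->
  measurable_fun setT g -> (forall x, 0 <= g x)%R -> {in ~` Q, g =1 cst 0%R} ->
  measurable_fun setT h -> (forall x, 0 <= h x)%R -> {in ~` Q, h =1 cst 0%R} ->
  \int[mu]_x (g x)%:E = \int[mu]_x (h x)%:E ->
  \int[P]_w (g (X i w) * F (profile X w))%:E = \int[P]_w (h (X i w) * F (profile X w))%:E.
Proof.
move=> Qconst mg g0 gQ mh h0 hQ gh.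
have [c [c0 Qc]] : exists c, (0 <= c)%R /\
    forall x, law_support mu x -> Q x -> interim P X F i x = c.
  have [[x0 [sx0 Qx0]]|noQ] := pselect (exists x0, law_support mu x0 /\ Q x0).
    by exists (interim P X F i x0); split=> [|x sx Qx]; [exact: interim_ge0|exact: Qconst].
  by exists 0%R; split=> // x sx Qx; exfalso; apply: noQ; exists x.
by rewrite !(integral_mul_interim_const (Q := Q) (c := c)) // gh.
Qed.

End Interim.

Lemma integrable_bounded {d : measure_display} {T : measurableType d} {R : realType}
    (m : {finite_measure set T -> \bar R}) (g : T -> R) (M : R) :
  measurable_fun setT g -> (forall x, `|g x| <= M) -> m.-integrable setT (EFin \o g).
Proof.
move=> mg gM; apply: (le_integrable measurableT (g := EFin \o cst M)).
- exact/measurable_EFinP.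
- by move=> x _; rewrite lee_fin (le_trans (gM x)) // ler_norm.
- exact: finite_measure_integrable_cst.
Qed.

Section Score.
Context {R : realType} (mu : probability R R).

Lemma indic_RposE (x : R) : \1_Rpos x = ((0 < x)%R)%:R :> R.
Proof.
rewrite indicE; have [x0|x0] := boolP (0 < x); first by rewrite mem_set.
by rewrite memNset //; exact/negP.
Qed.

Lemma indic_not_RposE (x : R) : \1_(~` Rpos) x = (~~ (0 < x)%R)%:R :> R.
Proof.
rewrite indicE in_setC; have [x0|x0] := boolP (0 < x); first by rewrite mem_set.
by rewrite memNset //; exact/negP.
Qed.

Definition agent_score (x : R) : R :=
  Uplus mu * \1_Rpos x - Uminus mu * \1_(~` Rpos) x.

Definition score n (v : n.-tuple R) : R := \sum_(i < n) agent_score (tnth v i).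

Lemma agent_scoreE x : agent_score x = if 0 < x then Uplus mu else - Uminus mu.
Proof.
rewrite /agent_score indic_RposE indic_not_RposE.
by case: (0 < x); rewrite /= ?mulr1 ?mulr0 ?subr0 ?sub0r.
Qed.

Lemma measurable_agent_score : measurable_fun setT agent_score.
Proof.
apply: measurable_funB; apply: measurable_funM; first exact: measurable_cst.
- exact: measurable_indic measurable_Rpos.
- exact: measurable_cst.
- exact: measurable_indic (measurableC measurable_Rpos).
Qed.

End Score.

Section BICInterim.
Context {R : realType} {d : measure_display} {Omega : measurableType d}.
Variables (P : probability Omega R) (mu : probability R R) (n : nat).
Variables (X : 'I_n -> Omega -> R) (F : n.-tuple R -> R).
Hypothesis bicF : BIC P mu X F.

Lemma BIC_interim_Rpos i x y : law_support mu x -> law_support mu y ->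
  Rpos x -> Rpos y -> interim P X F i x = interim P X F i y.
Proof.
move=> sx sy /= x0 y0; apply/eqP; rewrite eq_le.
by rewrite -(ler_pM2l y0) bicF // -(ler_pM2l x0) bicF.
Qed.

Lemma BIC_interim_not_Rpos i x y : ~ law_support mu 0 ->
  law_support mu x -> law_support mu y ->
  (~` Rpos) x -> (~` Rpos) y -> interim P X F i x = interim P X F i y.
Proof.
have neg z : ~ law_support mu 0 -> law_support mu z -> (~` Rpos) z -> z < 0.
  move=> not0 sz /negP; rewrite -leNgt le_eqVlt => /orP [/eqP z0|//].
  by move: sz; rewrite z0.
move=> not0 sx sy nx ny; have x0 := neg x not0 sx nx; have y0 := neg y not0 sy ny.
apply/eqP; rewrite eq_le.
by rewrite -(ler_nM2l x0) bicF // -(ler_nM2l y0) bicF.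
Qed.

End BICInterim.

Section Welfare.
Context {R : realType} {d : measure_display} {Omega : measurableType d}.
Variables (P : probability Omega R) (mu : probability R R) (n : nat).
Variables (X : 'I_n -> Omega -> R) (F : n.-tuple R -> R).
Hypotheses (iidX : iid P mu X) (scfF : SCF F).
Hypothesis mu_int : mu.-integrable setT (fun x => x%:E).
Local Open Scope ereal_scope.

Let mX i : measurable_fun setT (X i). Proof. by case: iidX. Qed.

Lemma integrable_comp_law i (g : R -> R) :
  mu.-integrable setT (EFin \o g) -> P.-integrable setT (EFin \o (g \o X i)).
Proof.
move=> /integrableP [/measurable_EFinP mg gfin]; apply/integrableP; split.
  exact/measurable_EFinP/(measurableT_comp mg (mX i)).
rewrite (eq_integral (fun w => (`|g (X i w)|)%:E)); last by [].
by rewrite (integral_comp_law iidX i (g := fun x => `|g x|%R)) //; exact: measurableT_comp.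
Qed.

Lemma integrable_mul_profile i (g : R -> R) : mu.-integrable setT (EFin \o g) ->
  P.-integrable setT (fun w => (g (X i w) * F (profile X w))%:E).
Proof.
move=> gint; have mg : measurable_fun setT g by case/integrableP: gint => /measurable_EFinP.
apply: (le_integrable measurableT _ _ (integrable_comp_law i gint)).
- apply/measurable_EFinP/measurable_funM; first exact: measurableT_comp mg (mX i).
  exact: measurableT_comp scfF.1 (measurable_profile mX).
- move=> w _; rewrite lee_fin normrM ler_piMr //.
  by case/andP: (scfF.2 (profile X w)) => F0 F1; rewrite ger0_norm.
Qed.

Lemma integrable_scaled_indic (c : R) (A : set R) : measurable A ->
  mu.-integrable setT (EFin \o (fun x => c * \1_A x)%R).
Proof.
move=> mA; apply: (integrable_bounded mu (M := `|c|%R)).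
  by apply: measurable_funM; [exact: measurable_cst|exact: measurable_indic].
move=> x; rewrite normrM indicE.
by case: (x \in A); rewrite ?normr1 ?normr0 ?mulr1 ?mulr0.
Qed.

Lemma integrable_agent_score : mu.-integrable setT (EFin \o agent_score mu).
Proof.
apply: (integrable_bounded mu (M := (Uplus mu + Uminus mu)%R)).
  exact: measurable_agent_score.
move=> x; rewrite agent_scoreE; case: (0 < x)%R; rewrite ?normrN.
  by rewrite ger0_norm ?Uplus_ge0 // lerDl Uminus_ge0.
by rewrite ger0_norm ?Uminus_ge0 // lerDr Uplus_ge0.
Qed.

Hypothesis bicF : BIC P mu X F.

Lemma integral_pos_part_mul_profile i : 0 < mu Rpos ->
  \int[P]_w ((@idfun R)^\+ (X i w) * F (profile X w))%:E =
  \int[P]_w (Uplus mu * \1_Rpos (X i w) * F (profile X w))%:E.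
Proof.
move=> mu_pos.
apply: (integral_mul_interim_eq iidX scfF (Q := Rpos)
  (h := fun x => (Uplus mu * \1_Rpos x)%R)).
- exact: BIC_interim_Rpos.
- exact/measurable_funrpos/measurable_id.
- exact: funrpos_ge0.
- by apply: le0_funrposE => x /negP; rewrite -leNgt.
- by apply: measurable_funM; [exact: measurable_cst|exact: measurable_indic measurable_Rpos].
- by move=> x; rewrite mulr_ge0 ?Uplus_ge0 // indic_RposE ler0n.
- by move=> x /set_mem /= /negP /negbTE x0; rewrite indic_RposE x0 mulr0.
- exact: integral_pos_part.
Qed.

Lemma integral_neg_part_mul_profile i : ~ law_support mu 0%R -> mu Rpos < 1 ->
  \int[P]_w ((@idfun R)^\- (X i w) * F (profile X w))%:E =
  \int[P]_w (Uminus mu * \1_(~` Rpos) (X i w) * F (profile X w))%:E.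
Proof.
move=> not0 mu_lt1.
apply: (integral_mul_interim_eq iidX scfF (Q := ~` Rpos)
  (h := fun x => (Uminus mu * \1_(~` Rpos) x)%R)).
- by move=> x y; exact: BIC_interim_not_Rpos.
- exact/measurable_funrneg/measurable_id.
- exact: funrneg_ge0.
- by rewrite setCK; apply: ge0_funrnegE => x /= /ltW.
- apply: measurable_funM; first exact: measurable_cst.
  exact: measurable_indic (measurableC measurable_Rpos).
- by move=> x; rewrite mulr_ge0 ?Uminus_ge0 // indic_not_RposE ler0n.
- by rewrite setCK => x /set_mem /= x0; rewrite indic_not_RposE x0 mulr0.
- exact: integral_neg_part.
Qed.

Lemma integral_value_mul_profile i : ~ law_support mu 0%R ->
  0 < mu Rpos -> mu Rpos < 1 ->
  \int[P]_w (X i w * F (profile X w))%:E =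
  \int[P]_w (agent_score mu (X i w) * F (profile X w))%:E.
Proof.
move=> not0 mu_pos mu_lt1.
have posBneg x : ((@idfun R)^\+ x - (@idfun R)^\- x)%R = x.
  by have := congr1 (fun f => f x) (funrposBneg (@idfun R)).
have Rpos_int := integrable_scaled_indic (Uplus mu) measurable_Rpos.
have not_Rpos_int := integrable_scaled_indic (Uminus mu) (measurableC measurable_Rpos).
rewrite (eq_integral (fun w => ((@idfun R)^\+ (X i w) * F (profile X w))%:E -
                               ((@idfun R)^\- (X i w) * F (profile X w))%:E)); last first.
  by move=> w _; rewrite -EFinB -mulrBl posBneg.
rewrite (integralB_EFin measurableT); last 2 first.
- exact: integrable_mul_profile (integrable_funrpos measurableT mu_int).
- exact: integrable_mul_profile (integrable_funrneg measurableT mu_int).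
rewrite integral_pos_part_mul_profile // integral_neg_part_mul_profile //.
rewrite -(integralB_EFin measurableT); last 2 first.
- exact: integrable_mul_profile Rpos_int.
- exact: integrable_mul_profile not_Rpos_int.
by apply: eq_integral => w _; rewrite /agent_score mulrBl EFinB.
Qed.

Lemma integrable_score_profile :
  P.-integrable setT (fun w => (F (profile X w) * score mu (profile X w))%:E).
Proof.
apply: (eq_integrable measurableT
  (fun w => \sum_(i < n) (agent_score mu (X i w) * F (profile X w))%:E)).
  move=> w _; rewrite sumEFin /score mulr_sumr; congr EFin.
  by apply: eq_bigr => i _; rewrite tnth_mktuple mulrC.
apply: (integrable_sum measurableT) => i _.
exact: integrable_mul_profile integrable_agent_score.
Qed.

Lemma welfare_BIC : ~ law_support mu 0%R -> 0 < mu Rpos -> mu Rpos < 1 ->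
  welfare P X F = \int[P]_w (F (profile X w) * score mu (profile X w))%:E.
Proof.
move=> not0 mu_pos mu_lt1.
transitivity (\int[P]_w \sum_(i < n) (X i w * F (profile X w))%:E).
  apply: eq_integral => w _; rewrite sumEFin mulr_sumr; congr EFin.
  by apply: eq_bigr => i _; rewrite mulrC.
rewrite integral_sum //; last by move=> i; exact: integrable_mul_profile mu_int.
transitivity (\int[P]_w \sum_(i < n) (agent_score mu (X i w) * F (profile X w))%:E).
  rewrite integral_sum //; last first.
    by move=> i; exact: integrable_mul_profile integrable_agent_score.
  by apply: eq_bigr => i _; exact: integral_value_mul_profile.
apply: eq_integral => w _; rewrite sumEFin /score mulr_sumr; congr EFin.
by apply: eq_bigr => i _; rewrite tnth_mktuple mulrC.
Qed.

End Welfare.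

Section QualifiedMajority.
Context {R : realType} (n k : nat).

Lemma natr_count_pos (v : n.-tuple R) :
  (count (fun i : 'I_n => 0 < tnth v i) (enum 'I_n))%:R =
  \sum_(i < n) \1_Rpos (tnth v i) :> R.
Proof.
rewrite -sum1_count big_enum_cond /= natr_sum big_mkcond /=.
by apply: eq_bigr => i _; rewrite indic_RposE; case: (0 < tnth v i).
Qed.

Lemma qmrE (v : n.-tuple R) :
  qmr k v = if k%:R <= \sum_(i < n) \1_Rpos (tnth v i) :> R then 1 else 0.
Proof. by rewrite /qmr -natr_count_pos ler_nat. Qed.

Lemma SCF_qmr : SCF (@qmr R n k).
Proof.
split=> [|v]; last by rewrite /qmr; case: ifP; rewrite ?ler01 ?lexx.
have -> : @qmr R n k =
    \1_[set r : R | k%:R <= r] \o (fun v : n.-tuple R => \sum_(i < n) \1_Rpos (tnth v i)).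
  apply/funext => v /=; rewrite qmrE indicE.
  by case: ifP => h; [rewrite mem_set|rewrite memNset //= h].
apply: measurableT_comp.
  apply: measurable_indic; rewrite (_ : [set r | _] = `[k%:R, +oo[%classic).
    exact: measurable_itv.
  by apply/seteqP; split=> r; rewrite /= in_itv /= andbT.
apply: measurable_sum => i.
by apply: measurableT_comp; [exact: measurable_indic measurable_Rpos|exact: measurable_tnth].
Qed.

Lemma anonymous_qmr mu : anonymous mu (@qmr R n k).
Proof.
move=> v pi _; rewrite !qmrE.
congr (if _ <= _ then _ else _).
under [RHS]eq_bigr => i _ do rewrite tnth_mktuple.
exact: reindex_inj (@perm_inj _ pi).
Qed.

Lemma ordinal_qmr mu : ordinal_scf mu (@qmr R n k).
Proof. by move=> v v' _ _ vv'; rewrite /qmr (eq_count vv'). Qed.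

End QualifiedMajority.

Section QualifiedMajorityBIC.
Context {R : realType} {d : measure_display} {Omega : measurableType d}.
Variables (P : probability Omega R) (mu : probability R R) (n k : nat).
Variables (X : 'I_n -> Omega -> R).
Hypothesis iidX : iid P mu X.

Lemma le_qmr_profile_repl i x x' w : \1_Rpos x' <= \1_Rpos x :> R ->
  qmr k (profile_repl X i x' w) <= qmr k (profile_repl X i x w).
Proof.
move=> xx'; rewrite !qmrE.
have le_sum : \sum_(j < n) \1_Rpos (tnth (profile_repl X i x' w) j) <=
              \sum_(j < n) \1_Rpos (tnth (profile_repl X i x w) j) :> R.
  by apply: ler_sum => j _; rewrite !tnth_mktuple; case: ifP.
case: ifP => [k_le'|_]; last by case: ifP.
by rewrite (le_trans k_le' le_sum).
Qed.

Lemma le_interim_qmr i x x' : \1_Rpos x' <= \1_Rpos x :> R ->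
  interim P X (qmr k) i x' <= interim P X (qmr k) i x.
Proof.
move=> xx'; have scf_qmr := @SCF_qmr R n k.
rewrite -lee_fin -!(interimE iidX scf_qmr); apply: ge0_le_integral => //.
- by move=> w _; rewrite lee_fin; case/andP: (scf_qmr.2 (profile_repl X i x' w)).
- exact: (measurable_scf_profile_repl iidX scf_qmr i x').
- exact: (measurable_scf_profile_repl iidX scf_qmr i x).
- by move=> w _; rewrite lee_fin le_qmr_profile_repl.
Qed.

Lemma BIC_qmr : BIC P mu X (qmr k).
Proof.
move=> i x x' _ _; case: (ltrgtP x 0) => [x0|x0|->]; last by rewrite !mul0r.
- rewrite ler_nM2l //; apply: le_interim_qmr.
  by rewrite !indic_RposE (ltNge 0 x) (ltW x0) ler0n.
- rewrite ler_pM2l //; apply: le_interim_qmr.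
  by rewrite !indic_RposE x0 ler_nat leq_b1.
Qed.

End QualifiedMajorityBIC.

Section ScoreSign.
Context {R : realType} (mu : probability R R) (n k : nat).
Hypothesis kbar_k : is_kbar mu n k.

Let npos (v : n.-tuple R) := count (fun i : 'I_n => 0 < tnth v i) (enum 'I_n).

Lemma scoreE v : score mu v = (Uplus mu + Uminus mu) * (npos v)%:R - Uminus mu * n%:R.
Proof.
have -> : Uminus mu * n%:R = \sum_(i < n) Uminus mu.
  by rewrite sumr_const card_ord mulr_natr.
rewrite /npos natr_count_pos mulr_sumr -sumrB.
apply: eq_bigr => i _; rewrite agent_scoreE indic_RposE.
by case: (0 < tnth v i); rewrite ?mulr1 ?mulr0 ?addrK ?sub0r.
Qed.

Lemma score_ge0 v : (k <= npos v)%N -> 0 <= score mu v.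
Proof.
move=> k_le; rewrite scoreE; have [Up0 Um0] := (Uplus_ge0 mu, Uminus_ge0 mu).
have := addr_ge0 Up0 Um0; rewrite le_eqVlt => /orP [/eqP S0|S_gt0].
  have Um00 : Uminus mu = 0 by lra.
  by rewrite -S0 Um00 !mul0r subr0.
case: kbar_k => _ kbar_gt _.
have : Uminus mu / (Uplus mu + Uminus mu) * n%:R < (npos v)%:R.
  by apply: (lt_le_trans kbar_gt); rewrite ler_nat.
rewrite mulrAC ltr_pdivrMr // => lt_Um.
by rewrite subr_ge0 [leRHS]mulrC ltW.
Qed.

Lemma score_le0 v : (npos v < k)%N -> score mu v <= 0.
Proof.
move=> lt_k; rewrite scoreE; have [Up0 Um0] := (Uplus_ge0 mu, Uminus_ge0 mu).
have := addr_ge0 Up0 Um0; rewrite le_eqVlt => /orP [/eqP S0|S_gt0].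
  have Um00 : Uminus mu = 0 by lra.
  by rewrite -S0 Um00 !mul0r subr0.
have [->|npos_gt0] := posnP (npos v).
  by rewrite mulr0 sub0r oppr_le0 mulr_ge0.
case: kbar_k => _ _ kbar_min.
have : ~~ (Uminus mu / (Uplus mu + Uminus mu) * n%:R < (npos v)%:R).
  apply/negP => lt_npos; move: (kbar_min (npos v)); rewrite npos_gt0 /=.
  have -> : (npos v <= n)%N by rewrite (leq_trans (count_size _ _)) // size_enum_ord.
  by move=> /(_ isT lt_npos); rewrite leqNgt lt_k.
rewrite -leNgt mulrAC ler_pdivlMr // => le_npos.
by rewrite subr_le0 [leLHS]mulrC.
Qed.

Lemma le_scf_score_qmr (F : n.-tuple R -> R) v : 0 <= F v <= 1 ->
  F v * score mu v <= qmr k v * score mu v.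
Proof.
case/andP=> F0 F1; rewrite /qmr; case: leqP => [k_le|lt_k].
  by rewrite mul1r ler_piMl // score_ge0.
by rewrite mul0r mulr_ge0_le0 // score_le0.
Qed.

End ScoreSign.

Unset Implicit Arguments. Set Strict Implicit. Set Printing Implicit Defensive.

Theorem proposition1 (R : realType) (d : measure_display) (Omega : measurableType d)
    (P : probability Omega R) (mu : probability R R) (n : nat)
    (X : 'I_n -> Omega -> R) (kbar : nat) :
  (2 <= n)%N ->
  iid P mu X ->
  ~ (law_support mu 0) ->
  mu.-integrable setT (fun x => x%:E) ->
  (0 < mu [set x : R | (0 < x)%R])%E -> (mu [set x : R | (0 < x)%R] < 1)%E ->
  is_kbar mu n kbar ->
  [/\ SCF (@qmr R n kbar), anonymous mu (@qmr R n kbar),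
      BIC P mu X (@qmr R n kbar), ordinal_scf mu (@qmr R n kbar)
    & forall f : n.-tuple R -> R, SCF f -> anonymous mu f -> BIC P mu X f ->
        (welfare P X f <= welfare P X (@qmr R n kbar))%E].
Proof.
move=> _ iidX not0 mu_int mu_pos mu_lt1 kbar_k.
have scf_qmr := @SCF_qmr R n kbar; have bic_qmr := BIC_qmr kbar iidX.
split; [exact: scf_qmr|exact: anonymous_qmr|exact: bic_qmr|exact: ordinal_qmr|].
move=> f scf_f _ bic_f.
rewrite (welfare_BIC iidX scf_f mu_int bic_f) //.
rewrite (welfare_BIC iidX scf_qmr mu_int bic_qmr) //.
apply: le_integral => //; [exact: integrable_score_profile..|].
by move=> w _; rewrite lee_fin le_scf_score_qmr // scf_f.2.
Qed.
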